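(* Let $m,n\ge1$ and let $F\subseteq\{1,\dots,m\}\times\{1,\dots,n\}$ be a binary image with row sums $(r_1,\dots,r_m)$ and column sums $(c_1,\dots,c_n)$ (no assumption on $r_1$ or $r_m$). Let $L_h(F)$ be the length of the horizontal boundary of $F$. Define $b_i=\#\{j:c_j\ge i\}$ and $d_i=b_i-r_i$ for $i=1,\dots,m$, and set $d_0=d_{m+1}=0$. Let $k$ be an integer with $1\le k\le m$ such that $d_k<0$ and $d_{k+1}\ge0$, and let $\sigma=\sum_{i=1}^k d_i$. Then for all integers $t,s\ge0$, every set of indices $\{i_1<\dots<i_{2t+1}\}\subseteq\{0,1,\dots,k,m+1\}$ and every set of indices $\{\tilde i_1<\dots<\tilde i_{2s+1}\}\subseteq\{0,k+1,k+2,\dots,m+1\}$, \[ L_h(F)\ \ge\ 2r_1+\big(d_{i_1}-d_{i_2}+d_{i_3}-\cdots-d_{i_{2t}}+2d_{i_{2t+1}}\big)+\big(d_{\tilde i_1}-d_{\tilde i_2}+d_{\tilde i_3}-\cdots-d_{\tilde i_{2s}}+2d_{\tilde i_{2s+1}}\big)-\sigma. \]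
   Context: A binary image is a finite set $F\subseteq\mathbb Z^2$; point $(i,j)$ lies in row $i$ and column $j$. The row sum $r_i$ is the number of points of $F$ in row $i$, and the column sum $c_j$ is the number of points of $F$ in column $j$. The horizontal boundary of $F$ is the set of ordered pairs of points $((i,j),(i',j))$ of $\mathbb Z^2$ with $|i-i'|=1$, $(i,j)\in F$ and $(i',j)\notin F$; its length is the number of such pairs. *)

From mathcomp Require Import all_boot all_order all_algebra.
Set Implicit Arguments. Unset Strict Implicit. Unset Printing Implicit Defensive.
Import Order.TTheory GRing.Theory Num.Theory.

(* A binary image is given by its membership predicate F : nat -> nat -> bool;
   F i j means the point (i,j) (row i, column j) belongs to the image. *)

Definition in_grid (m n : nat) (F : nat -> nat -> bool) : Prop :=
  forall i j, F i j -> (1 <= i <= m) && (1 <= j <= n).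

Definition rowsum (n : nat) (F : nat -> nat -> bool) (i : nat) : nat :=
  \sum_(1 <= j < n.+1) (F i j : nat).

Definition colsum (m : nat) (F : nat -> nat -> bool) (j : nat) : nat :=
  \sum_(1 <= i < m.+1) (F i j : nat).

Definition bseq (m n : nat) (F : nat -> nat -> bool) (i : nat) : nat :=
  \sum_(1 <= j < n.+1) ((i <= colsum m F j) : nat).

Definition dseq (m n : nat) (F : nat -> nat -> bool) (i : nat) : int :=
  if (1 <= i <= m) then ((bseq m n F i)%:Z - (rowsum n F i)%:Z)%R else 0%R.

(* Length of the horizontal boundary: number of pairs ((i,j),(i',j)) with
   |i - i'| = 1, (i,j) in F, (i',j) not in F.  Since F lies in the grid,
   it suffices to sum over (i,j) in the grid, counting the two neighbours
   (i-1,j) and (i+1,j) (i >= 1 so i.-1 is the true predecessor). *)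
Definition hboundary (m n : nat) (F : nat -> nat -> bool) : nat :=
  \sum_(1 <= i < m.+1) \sum_(1 <= j < n.+1)
     (F i j * ((~~ F i.-1 j : nat) + (~~ F i.+1 j : nat))).

Definition altsum (d : nat -> int) (s : seq nat) : int :=
  (\sum_(l < (size s).-1) (-1) ^+ l * d (nth 0 s l) + 2%:R * d (last 0 s))%R.

From Stdlib Require Import Lia.
From HB Require Import structures.
From mathcomp Require Import all_boot all_order all_algebra zify lra.
Set Implicit Arguments. Unset Strict Implicit. Unset Printing Implicit Defensive.
Import Order.TTheory GRing.Theory Num.Theory.
Local Open Scope ring_scope.

(* Both d and the horizontal boundary are sums over the columns of F: column j
   contributes e_j(i) = [1 <= i <= c_j] - F(i, j) to d_i and its number of
   vertical changes of colour to L_h.  An alternating sum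
   d_{i_1} - d_{i_2} + ... + 2 d_{i_last} is at most the up-variation of d on
   [0, i_last] plus d_{i_last}.  Applying this to d truncated to [0, k] and to
   (k, m+1], using d_k < 0 to drop the endpoint term when i_last = k, and using
   that up-variation is subadditive, the corollary reduces to one inequality per
   column.  That inequality is proved by reading the column downwards with a
   finite automaton: every step carries a local weight, and an explicit
   potential on the states, checked by computation, bounds the accumulated
   weight. *)

(** * Up-variation and alternating sums *)

Definition upvar (f : nat -> int) (a b : nat) : int :=
  \sum_(a <= p < b) Num.max (f p.+1 - f p) 0.

Lemma upvar_ge0 f a b : 0 <= upvar f a b.
Proof. by apply: sumr_ge0 => p _; rewrite le_max lexx orbT. Qed.

Lemma upvar_cat f a b c : (a <= b)%N -> (b <= c)%N ->
  upvar f a c = upvar f a b + upvar f b c.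
Proof. exact: big_cat_nat. Qed.

Lemma ler_sub_upvar f a b : (a <= b)%N -> f b - f a <= upvar f a b.
Proof.
by move=> ab; rewrite -telescope_sumr //; apply: ler_sum => p _; rewrite le_max lexx.
Qed.

Lemma max0_addr (R : realDomainType) (u v : R) : Num.max (u + v) 0 <= Num.max u 0 + Num.max v 0.
Proof.
rewrite ge_max addr_ge0 ?le_max ?lexx ?orbT // andbT.
by apply: lerD; rewrite le_max lexx.
Qed.

Lemma upvar_sum (I : Type) (r : seq I) (F : I -> nat -> int) a b :
  upvar (fun p => \sum_(j <- r) F j p) a b <= \sum_(j <- r) upvar (F j) a b.
Proof.
rewrite /upvar exchange_big; apply: ler_sum => p _; rewrite -sumrB.
apply: (big_ind2 (fun u v => Num.max u 0 <= v)) => //.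
by move=> u1 v1 u2 v2 h1 h2; apply: le_trans (max0_addr _ _) (lerD h1 h2).
Qed.

Lemma eq_upvar (f g : nat -> int) a b : f =1 g -> upvar f a b = upvar g a b.
Proof. by move=> fg; apply: eq_bigr => p _; rewrite !fg. Qed.

Lemma altsum1 (f : nat -> int) a : altsum f [:: a] = f a + f a.
Proof. by rewrite /altsum big_ord0 add0r mulr_natl mulr2n. Qed.

Lemma altsum_cons2 (f : nat -> int) a b s : s != [::] ->
  altsum f [:: a, b & s] = f a - f b + altsum f s.
Proof.
case: s => [//|c s] _; rewrite /altsum /= !big_ord_recl /= expr0 mul1r expr1 mulN1r.
rewrite !addrA; congr (_ + _ + _); apply: eq_bigr => i _.
by rewrite /bump /= !exprS !mulN1r opprK.
Qed.

Lemma eq_in_altsum (f g : nat -> int) s : s != [::] -> {in s, f =1 g} ->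
  altsum f s = altsum g s.
Proof.
case: s => [//|a s] _ fg; rewrite /altsum (fg _ (mem_last a s)); congr (_ + _).
apply: eq_bigr => i _; rewrite fg // mem_nth // (leq_trans (ltn_ord i)) ?leq_pred //.
Qed.

Lemma sorted_last_ge a s : sorted ltn (a :: s) -> (a <= last a s)%N.
Proof.
elim: s a => [//|b s IH] a /= /andP [ab bs].
exact: leq_trans (ltnW ab) (IH b bs).
Qed.

Lemma altsum_le_upvar_cons (f : nat -> int) a s :
  sorted ltn (a :: s) -> ~~ odd (size s) ->
  altsum f (a :: s) <= f a + upvar f a (last a s) + f (last a s).
Proof.
move=> hs /negbTE ev.
have [n sz] : exists n, size s = n.*2 by exists (size s)./2; rewrite even_halfK // ev.
clear ev; elim: n s a sz hs => [|n IH] [|b [|c s]] a //=.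
  by rewrite altsum1 /upvar big_geq // addr0.
move=> [sz] /andP [ab /andP [bc cs]].
rewrite altsum_cons2 //.
have cl := sorted_last_ge cs.
rewrite (upvar_cat f (ltnW ab) (leq_trans (ltnW bc) cl)) (upvar_cat f (ltnW bc) cl).
have IHs := IH s c sz cs; have := ler_sub_upvar f (ltnW bc); have := upvar_ge0 f a b.
move: IHs => /=; lra.
Qed.

Lemma altsum_le_upvar (f : nat -> int) s : f 0%N = 0 -> sorted ltn s -> odd (size s) ->
  altsum f s <= upvar f 0 (last 0%N s) + f (last 0%N s).
Proof.
case: s => [//|a s] f0 hs hodd /=.
rewrite (upvar_cat f (leq0n a) (sorted_last_ge hs)).
have := altsum_le_upvar_cons f hs hodd; have := ler_sub_upvar f (leq0n a).
rewrite f0; lra.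
Qed.

Definition lowpart (k : nat) (f : nat -> int) (i : nat) : int :=
  if (i <= k)%N then f i else 0.
Definition highpart (k : nat) (f : nat -> int) (i : nat) : int :=
  if (k < i)%N then f i else 0.

Lemma all_last (P : pred nat) s : s != [::] -> all P s -> P (last 0%N s).
Proof. by case: s => // a s _ /allP; apply; apply: mem_last. Qed.

Lemma altsum_lowpart_le (d : nat -> int) k I : d 0%N = 0 -> d k < 0 ->
  sorted ltn I -> odd (size I) -> all (fun i => (i <= k)%N || (d i == 0)) I ->
  altsum d I <= upvar (lowpart k d) 0 (last 0%N I)
                + (if last 0%N I == k then 0 else lowpart k d (last 0%N I)).
Proof.
move=> d0 dk sI oI aI; have I0 : I != [::] by case: (I) oI.
rewrite (@eq_in_altsum _ (lowpart k d) _ I0); last first.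
  move=> i /(allP aI) /orP [ik|/eqP di]; rewrite /lowpart; first by rewrite ik.
  by rewrite di if_same.
apply: le_trans (altsum_le_upvar _ sI oI) _; first by rewrite /lowpart d0.
by rewrite lerD2l; case: eqP => [->|//]; rewrite /lowpart leqnn ltW.
Qed.

Lemma altsum_highpart_le (d : nat -> int) k J : d 0%N = 0 ->
  sorted ltn J -> odd (size J) -> all (fun i => (k < i)%N || (d i == 0)) J ->
  altsum d J <= upvar (highpart k d) 0 (last 0%N J) + highpart k d (last 0%N J).
Proof.
move=> d0 sJ oJ aJ; have J0 : J != [::] by case: (J) oJ.
rewrite (@eq_in_altsum _ (highpart k d) _ J0); last first.
  move=> i /(allP aJ) /orP [ki|/eqP di]; rewrite /highpart; first by rewrite ki.
  by rewrite di if_same.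
by apply: altsum_le_upvar.
Qed.

Lemma Posz_sum (I : Type) (r : seq I) (F : I -> nat) :
  (\sum_(i <- r) F i)%N%:Z = \sum_(i <- r) (F i)%:Z.
Proof. exact: (big_morph Posz PoszD). Qed.

Lemma sum_nat_if_lt (F : nat -> int) a N : (a <= N)%N ->
  \sum_(0 <= p < N) (if (p < a)%N then F p else 0) = \sum_(0 <= p < a) F p.
Proof. by move=> aN; rewrite (big_nat_widen _ _ _ _ _ aN) [RHS]big_mkcond. Qed.

Lemma sum_nat_if_eq (F : nat -> int) a N : (a < N)%N ->
  \sum_(0 <= p < N) (if p == a then F p else 0) = F a.
Proof. by move=> aN; rewrite -big_mkcond big_nat1_eq /= aN. Qed.

Lemma sum_bool_le (x : nat -> bool) n : (\sum_(1 <= i < n.+1) x i <= n)%N.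
Proof.
apply: (@leq_trans (\sum_(1 <= i < n.+1) 1)%N).
  by apply: leq_sum => i _; apply: leq_b1.
by rewrite sum_nat_const_nat muln1 subn1.
Qed.

(** * An automaton reading one column *)

Inductive phase := Before | At | After.

Definition opt_of_phase (p : phase) : option bool :=
  match p with Before => None | At => Some false | After => Some true end.
Definition phase_of_opt (o : option bool) : phase :=
  match o with None => Before | Some false => At | Some true => After end.
Lemma opt_of_phaseK : cancel opt_of_phase phase_of_opt. Proof. by case. Qed.
HB.instance Definition _ := Equality.copy phase (can_type opt_of_phaseK).

Definition phase_of (n a : nat) : phase :=
  if (n < a)%N then Before else if n == a then At else After.

Definition phase_step (p p' : phase) : bool :=
  match p, p' with
  | Before, (Before | At) | At, After | After, After => true
  | _, _ => false
  end.

Lemma phase_of_step n a : phase_step (phase_of n a) (phase_of n.+1 a).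
Proof. by rewrite /phase_of; case: ltngtP => h; case: ltngtP => h' //; lia. Qed.

Lemma phase_of_Before n a : (phase_of n a == Before) = (n < a)%N.
Proof. by rewrite /phase_of; case: ltngtP. Qed.

Lemma phase_of_At n a : (phase_of n a == At) = (n == a).
Proof. by rewrite /phase_of; case: ltngtP. Qed.

Lemma phase_of_After n a : (phase_of n a == After) = (a < n)%N.
Proof. by rewrite /phase_of; case: ltngtP. Qed.

(* The state of a column x at row p: x p, the same pixel of the column pushed
   up, the position of p relative to k and to the last indices q, r of I and J,
   and the partial sum D p of the column's contributions to d_1, ..., d_p,
   which is nonnegative and is kept only up to 2. *)
Record colstate := ColState {
  cs_pixel : bool; cs_pushed : bool; cs_k : phase; cs_q : phase; cs_r : phase;
  cs_defect : nat }.

Definition forall_bool (P : bool -> bool) : bool := P false && P true.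
Definition forall_phase (P : phase -> bool) : bool := [&& P Before, P At & P After].
Definition forall_colstate (P : colstate -> bool) : bool :=
  forall_bool (fun x => forall_bool (fun y => forall_phase (fun k => forall_phase (fun q =>
  forall_phase (fun r => all (fun d => P (ColState x y k q r d)) (iota 0 3)))))).

Lemma forall_boolP P b : forall_bool P -> P b.
Proof. by case: b => /andP []. Qed.

Lemma forall_phaseP P p : forall_phase P -> P p.
Proof. by case: p => /and3P []. Qed.

Lemma forall_colstateP P s : forall_colstate P -> (cs_defect s < 3)%N -> P s.
Proof.
case: s => x y k q r d /(forall_boolP x) /(forall_boolP y) /(forall_phaseP k).
by move=> /(forall_phaseP q) /(forall_phaseP r) /allP + hd; apply; rewrite mem_iota.
Qed.

Lemma forall_colstate2P (P : colstate -> colstate -> bool) s s' :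
  forall_colstate (fun s => forall_colstate (P s)) ->
  (cs_defect s < 3)%N -> (cs_defect s' < 3)%N -> P s s'.
Proof. by move=> hP hs; apply: forall_colstateP; apply: forall_colstateP hP hs. Qed.

Definition cs_dcol (s : colstate) : int :=
  (cs_pushed s : nat)%:Z - (cs_pixel s : nat)%:Z.
Definition cs_low (s : colstate) : int := if cs_k s == After then 0 else cs_dcol s.
Definition cs_high (s : colstate) : int := if cs_k s == After then cs_dcol s else 0.

(* Summed along a column, these weights give the column inequality with its
   term -D k weakened to -min (D k) 2 (see [step_weight_sum]). *)
Definition step_weight (s s' : colstate) : int :=
    (if cs_q s == Before then Num.max (cs_low s' - cs_low s) 0 else 0)
  + (if cs_r s == Before then Num.max (cs_high s' - cs_high s) 0 else 0)
  + (if (cs_q s == At) && (cs_k s != At) then cs_low s else 0)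
  + (if cs_r s == At then cs_high s else 0)
  - (if cs_k s == At then (cs_defect s)%:Z else 0)
  - (cs_pixel s' != cs_pixel s : nat)%:Z.

(* Only the step from row 0 may switch the pushed column on; a capped defect
   2 may stay 2 when the true defect decreases. *)
Definition colstep (first : bool) (s s' : colstate) : bool :=
  [&& phase_step (cs_k s) (cs_k s'), phase_step (cs_q s) (cs_q s'),
      phase_step (cs_r s) (cs_r s'), first || (cs_pushed s' ==> cs_pushed s),
      (cs_pixel s' <= cs_defect s + cs_pushed s')%N &
      (cs_defect s' == minn (cs_defect s + cs_pushed s' - cs_pixel s') 2)
      || (cs_defect s == 2%N) && (cs_defect s' == 2%N)].

Definition cs_initial (s : colstate) : bool :=
  [&& ~~ cs_pixel s, ~~ cs_pushed s, cs_k s == Before, cs_q s != After,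
      cs_r s != After & cs_defect s == 0%N].

Definition cs_consistent (s : colstate) : bool :=
  cs_pushed s && ~~ cs_pixel s ==> (0 < cs_defect s)%N.

Definition cs_finished (s : colstate) : bool :=
  if cs_k s == After then cs_r s == After else cs_q s == After.

(* Read off from a longest-path computation on the automaton; the two checks
   below say that no run gains more weight than the potential allows. *)
Definition potential (s : colstate) : int :=
  if cs_pixel s then (cs_finished s || cs_pushed s && (cs_defect s == 0%N))%:R
  else if cs_defect s == 0%N then 0
  else if cs_finished s && (~~ cs_pushed s || (cs_defect s == 2%N)) then 2 else 1.

Lemma potential_first : forall_colstate (fun s => forall_colstate (fun s' =>
  cs_initial s && colstep true s s' ==>
  ((2 * cs_pixel s')%:Z + step_weight s s' <= potential s'))).
Proof. by vm_compute. Qed.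

Lemma potential_step : forall_colstate (fun s => forall_colstate (fun s' =>
  cs_consistent s && colstep false s s' ==>
  (potential s + step_weight s s' <= potential s'))).
Proof. by vm_compute. Qed.

Lemma capped_defect_step (d d' : nat) (y x : bool) : (d' + x = d + y)%N ->
  (minn d' 2 == minn (minn d 2 + y - x) 2) || (minn d 2 == 2%N) && (minn d' 2 == 2%N).
Proof.
move=> e; case: (leqP 2 d) => h; case: (leqP 2 d') => h'; rewrite ?eqxx ?andbT ?orbT //.
all: by apply/orP; left; apply/eqP; move: e h h'; case: x; case: y => /=; lia.
Qed.

(** * One column *)

Definition pushed (c i : nat) : bool := (0 < i <= c)%N.

Definition dcol (c : nat) (x : nat -> bool) (i : nat) : int :=
  (pushed c i : nat)%:Z - (x i : nat)%:Z.

Definition flips (x : nat -> bool) (N : nat) : nat :=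
  (\sum_(0 <= p < N) (x p.+1 != x p))%N.

Section Column.

Variables (m k q r : nat) (x : nat -> bool).
Hypothesis x0 : x 0 = false.
Hypothesis x_gt : forall i, (m < i)%N -> x i = false.
Hypotheses (k_gt0 : (0 < k)%N) (k_le : (k <= m)%N).
Hypotheses (q_le : (q <= m.+1)%N) (r_le : (r <= m.+1)%N).

Let c := (\sum_(1 <= i < m.+1) x i)%N.
Let defect n := (\sum_(1 <= i < n.+1) pushed c i - \sum_(1 <= i < n.+1) x i)%N.
Let dlow := lowpart k (dcol c x).
Let dhigh := highpart k (dcol c x).

Lemma sum_pushed n : (\sum_(1 <= i < n.+1) pushed c i)%N = minn n c.
Proof.
elim: n => [|n IH]; first by rewrite big_geq // min0n.
by rewrite big_nat_recr //= IH /pushed /=; case: ltnP => hn; lia.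
Qed.

Lemma sum_col_eq n : (m <= n)%N -> (\sum_(1 <= i < n.+1) x i)%N = c.
Proof.
move=> mn; rewrite (@big_cat_nat _ _ _ m.+1) //= -[RHS]addn0; congr (_ + _)%N.
by rewrite big_nat_cond big1 // => i /andP [/andP [mi _] _]; rewrite x_gt.
Qed.

Lemma sum_col_le n : (\sum_(1 <= i < n.+1) x i <= minn n c)%N.
Proof.
rewrite leq_min sum_bool_le /=.
case: (leqP m n) => mn; first by rewrite sum_col_eq.
by rewrite /c [X in (_ <= X)%N](@big_cat_nat _ _ _ n.+1) //= ?leq_addr // ltnW.
Qed.

Lemma defect_rec n : (defect n.+1 + x n.+1 = defect n + pushed c n.+1)%N.
Proof.
have hp : minn n.+1 c = (minn n c + pushed c n.+1)%N by rewrite -!sum_pushed big_nat_recr.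
have := sum_col_le n; have := sum_col_le n.+1; rewrite /defect !sum_pushed big_nat_recr //=.
by move: hp; case: (x n.+1); case: (pushed c n.+1) => /=; lia.
Qed.

Lemma sum_dcol n : \sum_(1 <= i < n.+1) dcol c x i = (defect n)%:Z.
Proof.
elim: n => [|n IH]; first by rewrite /defect !big_geq.
by rewrite big_nat_recr //= IH /dcol; have := defect_rec n; lia.
Qed.

Let col_state n := ColState (x n) (pushed c n)
  (phase_of n k) (phase_of n q) (phase_of n r) (minn (defect n) 2).

Lemma col_state_defect n : (cs_defect (col_state n) < 3)%N.
Proof. by rewrite /= ltnS geq_minr. Qed.

Lemma col_state_consistent n : cs_consistent (col_state n).
Proof.
apply/implyP => /= /andP [pn xn]; case: n pn xn => [//|n] pn /negbTE xn.
by have := defect_rec n; rewrite pn xn; lia.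
Qed.

Lemma col_state_initial : cs_initial (col_state 0).
Proof.
by rewrite /cs_initial /= x0 /phase_of k_gt0 /defect !big_geq //; case: q; case: r.
Qed.

Lemma col_state_step n : colstep (n == 0%N) (col_state n) (col_state n.+1).
Proof.
have e := defect_rec n.
rewrite /colstep /= !phase_of_step capped_defect_step // andbT /=; apply/andP; split.
  case: n e => [//|n] _ /=; apply/implyP; rewrite /pushed; lia.
by move: e; case: (x n.+1); case: (pushed c n.+1) => /=; lia.
Qed.

Lemma potential_scan n : (0 < n)%N ->
  (2 * x 1)%:Z + \sum_(0 <= p < n) step_weight (col_state p) (col_state p.+1)
    <= potential (col_state n).
Proof.
elim: n => [//|[|n] IH] _.
  rewrite big_nat1; have /implyP := forall_colstate2P potential_first
    (col_state_defect 0) (col_state_defect 1).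
  by apply; rewrite col_state_initial; apply: col_state_step.
rewrite big_nat_recr //= addrA; apply: le_trans (lerD (IH isT) (lexx _)) _.
have /implyP := forall_colstate2P potential_step
  (col_state_defect n.+1) (col_state_defect n.+2).
by apply; rewrite col_state_consistent; apply: col_state_step.
Qed.

Lemma col_state_low p : cs_low (col_state p) = dlow p.
Proof. by rewrite /cs_low /dlow /lowpart /= phase_of_After; case: leqP. Qed.

Lemma col_state_high p : cs_high (col_state p) = dhigh p.
Proof. by rewrite /cs_high /dhigh /highpart /= phase_of_After; case: ltnP. Qed.

Lemma step_weight_sum :
  \sum_(0 <= p < m.+2) step_weight (col_state p) (col_state p.+1) =
  upvar dlow 0 q + upvar dhigh 0 r + (if q == k then 0 else dlow q) + dhigh r
  - (minn (defect k) 2)%:Z - (flips x m.+2)%:Z.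
Proof.
rewrite /step_weight !sumrB !big_split /=; congr (_ + _ + _ + _ - _ - _).
- under eq_bigr => p _ do rewrite phase_of_Before !col_state_low.
  by rewrite sum_nat_if_lt // ltnW.
- under eq_bigr => p _ do rewrite phase_of_Before !col_state_high.
  by rewrite sum_nat_if_lt // ltnW.
- rewrite -(sum_nat_if_eq (fun=> if q == k then 0 else dlow q) (q_le : (q < m.+2)%N)).
  apply: eq_bigr => p _; rewrite phase_of_At col_state_low.
  by case: (eqVneq p q) => [->|]; rewrite ?phase_of_At //=; case: eqP.
- under eq_bigr => p _ do rewrite phase_of_At col_state_high.
  by rewrite sum_nat_if_eq.
- under eq_bigr => p _ do rewrite phase_of_At.
  by rewrite sum_nat_if_eq // ltnS leqW.
- by rewrite /flips Posz_sum.
Qed.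

Lemma col_state_final : col_state m.+2 = ColState false false After After After 0.
Proof.
have after a : (a <= m.+1)%N -> phase_of m.+2 a = After.
  by move=> ha; rewrite /phase_of ltnNge leqW // gtn_eqF.
have cm : (c <= m)%N by have := sum_col_le m; rewrite sum_col_eq // leq_min => /andP [].
have pf : pushed c m.+2 = false by rewrite /pushed; apply/negbTE; lia.
have d0 : defect m.+2 = 0%N by rewrite /defect sum_pushed sum_col_eq; lia.
by rewrite /col_state x_gt // pf d0 !after // leqW.
Qed.

Lemma column_bound :
  (2 * x 1)%:Z + upvar dlow 0 q + (if q == k then 0 else dlow q) + upvar dhigh 0 r + dhigh r
    - \sum_(1 <= i < k.+1) dcol c x i <= (flips x m.+2)%:Z.
Proof.
have := potential_scan (isT : (0 < m.+2)%N).
rewrite step_weight_sum col_state_final sum_dcol.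
have : (minn (defect k) 2)%:Z <= (defect k)%:Z by rewrite lez_nat geq_minl.
rewrite /potential /=; lra.
Qed.

End Column.

(** * From images to columns *)

Lemma grid_row0 m n F j : in_grid m n F -> F 0 j = false.
Proof. by move=> grid; apply/negbTE/negP => /grid. Qed.

Lemma grid_row_gt m n F i j : in_grid m n F -> (m < i)%N -> F i j = false.
Proof.
move=> grid mi; apply/negbTE/negP => /grid /andP [/andP [_ im] _].
by move: mi; rewrite ltnNge im.
Qed.

Lemma dseq_sum m n F i : in_grid m n F ->
  dseq m n F i = \sum_(1 <= j < n.+1) dcol (colsum m F j) (fun i => F i j) i.
Proof.
move=> grid; rewrite /dseq /bseq /rowsum; case: ifP => im.
  rewrite !Posz_sum -sumrB; apply: eq_bigr => j _.
  by rewrite /dcol /pushed; case/andP: im => -> _.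
rewrite big1 // => j _.
have Fij : F i j = false by apply/negbTE/negP => /grid /andP [iF _]; rewrite iF in im.
have cm : (colsum m F j <= m)%N := sum_bool_le (fun i => F i j) m.
rewrite /dcol /pushed Fij; suff -> : (0 < i <= colsum m F j)%N = false by [].
by apply/negP => /andP [i0 ic]; move/negbT: im; rewrite i0 /=; lia.
Qed.

Lemma col_boundary_flips m (x : nat -> bool) :
  x 0 = false -> (forall i, (m < i)%N -> x i = false) ->
  (\sum_(1 <= i < m.+1) x i * ((~~ x i.-1 : nat) + (~~ x i.+1 : nat)))%N = flips x m.+2.
Proof.
move=> x0 x_gt; rewrite /flips.
rewrite [RHS](eq_bigr (fun p => (x p.+1 && ~~ x p) + (x p && ~~ x p.+1))%N); last first.
  by move=> p _; case: (x p); case: (x p.+1).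
rewrite [LHS](eq_bigr (fun i => (x i && ~~ x i.-1) + (x i && ~~ x i.+1))%N); last first.
  by move=> i _; case: (x i); case: (x i.-1); case: (x i.+1).
rewrite !big_split /=; congr (_ + _)%N.
  have -> : (\sum_(0 <= p < m.+2) (x p.+1 && ~~ x p : nat))%N
          = (\sum_(1 <= i < m.+3) (x i && ~~ x i.-1 : nat))%N by rewrite big_add1.
  rewrite (big_nat_recr m.+2) // (big_nat_recr m.+1) //= (x_gt m.+1 (ltnSn m)).
  by rewrite (x_gt m.+2 (ltnW (ltnSn m.+1))) /= !addn0.
by rewrite (big_ltn (m := 0)) // x0 add0n (big_nat_recr m.+1) //= x_gt // addn0.
Qed.

Lemma hboundary_sum m n F : in_grid m n F ->
  hboundary m n F = (\sum_(1 <= j < n.+1) flips (fun i => F i j) m.+2)%N.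
Proof.
move=> grid; rewrite /hboundary exchange_big_nat; apply: eq_bigr => j _.
by apply: col_boundary_flips => [|i]; [apply: grid_row0 grid | apply: grid_row_gt grid].
Qed.

Lemma image_bound m n F k q r : in_grid m n F -> (0 < k <= m)%N ->
  (q <= m.+1)%N -> (r <= m.+1)%N ->
  (2 * rowsum n F 1)%:Z + upvar (lowpart k (dseq m n F)) 0 q
    + (if q == k then 0 else lowpart k (dseq m n F) q)
    + upvar (highpart k (dseq m n F)) 0 r + highpart k (dseq m n F) r
    - \sum_(1 <= i < k.+1) dseq m n F i <= (hboundary m n F)%:Z.
Proof.
move=> grid /andP [k0 km] qm rm.
pose e j := dcol (colsum m F j) (fun i => F i j).
have dE i : dseq m n F i = \sum_(1 <= j < n.+1) e j i by apply: dseq_sum.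
have lowE : lowpart k (dseq m n F) =1 fun i => \sum_(1 <= j < n.+1) lowpart k (e j) i.
  by move=> i; rewrite /lowpart dE; case: leqP => _; rewrite ?big1_eq.
have highE : highpart k (dseq m n F) =1 fun i => \sum_(1 <= j < n.+1) highpart k (e j) i.
  by move=> i; rewrite /highpart dE; case: ltnP => _; rewrite ?big1_eq.
have ifE : (if q == k then 0 else \sum_(1 <= j < n.+1) lowpart k (e j) q)
    = \sum_(1 <= j < n.+1) (if q == k then 0 else lowpart k (e j) q).
  by case: eqVneq => _; rewrite ?big1_eq.
have rowE : (2 * rowsum n F 1)%:Z = \sum_(1 <= j < n.+1) (2 * F 1%N j)%:Z.
  by rewrite /rowsum big_distrr Posz_sum.
rewrite (eq_upvar _ _ lowE) (eq_upvar _ _ highE) lowE highE ifE rowE.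
rewrite (eq_bigr _ (fun i _ => dE i)) exchange_big_nat /= hboundary_sum // Posz_sum.
apply: le_trans (_ : _ <= \sum_(1 <= j < n.+1) ((2 * F 1%N j)%:Z
    + upvar (lowpart k (e j)) 0 q + (if q == k then 0 else lowpart k (e j) q)
    + upvar (highpart k (e j)) 0 r + highpart k (e j) r - \sum_(1 <= i < k.+1) e j i)) _.
  rewrite sumrB !big_split /=.
  have := upvar_sum (index_iota 1 n.+1) (fun j => lowpart k (e j)) 0 q.
  have := upvar_sum (index_iota 1 n.+1) (fun j => highpart k (e j)) 0 r.
  lra.
apply: ler_sum => j _; apply: column_bound => //.
  exact: grid_row0 grid.
by move=> i; apply: grid_row_gt grid.
Qed.

Local Close Scope ring_scope.

Theorem corollary5p3 (m n : nat) (F : nat -> nat -> bool) (k : nat) :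
  1 <= m -> 1 <= n -> in_grid m n F ->
  1 <= k <= m ->
  (dseq m n F k < 0)%R -> (0 <= dseq m n F k.+1)%R ->
  forall (t s : nat) (I J : seq nat),
    size I = (2 * t).+1 -> sorted ltn I ->
    all (fun x => (x <= k) || (x == m.+1)) I ->
    size J = (2 * s).+1 -> sorted ltn J ->
    all (fun x => (x == 0) || (k < x <= m.+1)) J ->
    ((2 * rowsum n F 1)%:Z + altsum (dseq m n F) I + altsum (dseq m n F) J
       - \sum_(1 <= i < k.+1) dseq m n F i <= (hboundary m n F)%:Z)%R.
Proof.
move=> _ _ grid km dk _ t s I J sI hI aI sJ hJ aJ.
have d0 : dseq m n F 0 = 0%R by [].
have dm : dseq m n F m.+1 = 0%R by rewrite /dseq ltnn andbF.
have oI : odd (size I) by rewrite sI /= mul2n odd_double.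
have oJ : odd (size J) by rewrite sJ /= mul2n odd_double.
have lastI : last 0 I <= m.+1.
  apply: (all_last (P := fun x => x <= m.+1)); first by case: (I) oI.
  by apply: sub_all aI => i /orP [ik|/eqP ->] //; case/andP: km => _; lia.
have lastJ : last 0 J <= m.+1.
  apply: (all_last (P := fun x => x <= m.+1)); first by case: (J) oJ.
  by apply: sub_all aJ => i /orP [/eqP ->|/andP []].
have aI' : all (fun i => (i <= k) || (dseq m n F i == 0%R)) I.
  by apply: sub_all aI => i /orP [->|/eqP ->] //; rewrite dm eqxx orbT.
have aJ' : all (fun i => (k < i) || (dseq m n F i == 0%R)) J.
  by apply: sub_all aJ => i /orP [/eqP ->|/andP [-> _]] //; rewrite d0 eqxx orbT.
have := image_bound grid km lastI lastJ.
have := altsum_lowpart_le d0 dk hI oI aI'.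
have := altsum_highpart_le d0 hJ oJ aJ'.
lra.
Qed.
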